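(* Let $\mathcal{M}=(W,\leq,R,V)$ be an extended conditional intuitionistic model and define $\mathcal{M}^{n4}=(W,\leq,R^{n4},V^+,V^-)$ by $R^{n4}:=\{(w,(X,Y),v)\mid\exists u\,((w,X,u)\in R\ \&\ (u,Y,v)\in R)\}$, $V^+(p_i):=V(p_i)$, $V^-(p_i):=V(q_i)$. Then (1) $\mathcal{M}^{n4}$ is a Nelsonian conditional model, and (2) for every $w\in W$ and every $\phi\in\mathcal{L}_{\Box\!\!\rightarrow}$, $\mathcal{M}^{n4},w\models^+\phi$ iff $\mathcal{M},w\models^iE^\pm(\phi)$.
   Context: $\mathcal{L}_{\Box\!\!\rightarrow}$ is built from variables $p_0,p_1,\dots$ with $\wedge,\vee,\to$, strong negation $\sim$, and a binary would-conditional $\Box\!\!\rightarrow$. A Nelsonian conditional model is $(W,\leq,R,V^+,V^-)$ with $W\neq\emptyset$, $\leq$ a preorder, $V^\pm$ assigning upward-closed sets to variables, $R\subseteq W\times(\mathcal{P}(W)\times\mathcal{P}(W))\times W$ satisfying for all $X,Y$: (c1) $w\leq w'$ and $R_{(X,Y)}(w,v)$ imply $R_{(X,Y)}(w',v')$ for some $v'\geq v$; (c2) $R_{(X,Y)}(w,v)$ and $v\leq v'$ imply $R_{(X,Y)}(w',v')$ for some $w'\geq w$. Verification $\models^+$/falsification $\models^-$: atoms by $V^\pm$; $\wedge$ verified iff both verified, falsified iff one falsified; $\vee$ dually; $\sim$ swaps; $w\models^+\psi\to\chi$ iff for all $v\geq w$, $v\models^+\psi$ implies $v\models^+\chi$;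 $w\models^-\psi\to\chi$ iff $w\models^+\psi$ and $w\models^-\chi$; $w\models^+\psi\Box\!\!\rightarrow\chi$ iff for all $v\geq w$ and $u$ with $R_{\|\psi\|}(v,u)$, $u\models^+\chi$; $w\models^-\psi\Box\!\!\rightarrow\chi$ iff some $u$ has $R_{\|\psi\|}(w,u)$ and $u\models^-\chi$; $\|\psi\|=(\{w\mid w\models^+\psi\},\{w\mid w\models^-\psi\})$. The target language $\mathcal{L}^{e+}_{(\Box\!\!\rightarrow,\Diamond\!\!\rightarrow)}$ has variables $p_i$ and extra variables $q_i$, connectives $\wedge,\vee,\to$ and primitive binary $\Box\!\!\rightarrow$, $\Diamond\!\!\rightarrow$ (no negation). An extended conditional intuitionistic model is $(W,\leq,R,V)$ with $\leq$ a preorder, $V$ assigning upward-closed sets to all $p_i,q_i$, $R\subseteq W\times\mathcal{P}(W)\times W$ such that for all $X$: if $w\leq w'$ and $R_X(w,v)$ then $R_X(w',v')$ for some $v'\geq v$; if $R_X(w,v)$ and $v\leq v'$ then $R_X(w',v')$ for some $w'\geq w$. $\models^i$: atoms by $V$; $\wedge,\vee$ pointwise; $w\models^i\psi\to\chi$ iff for all $v\geq w$, $v\models^i\psi$ implies $v\models^i\chi$; $w\models^i\psi\Box\!\!\rightarrow\chi$ iff for all $v\geq w$ and $u$ with $R_{\|\psi\|^i}(v,u)$, $u\models^i\chi$; $w\models^i\psi\Diamond\!\!\rightarrow\chi$ iff some $u$ has $R_{\|\psi\|^i}(w,u)$ and $u\models^i\chi$; $\|\psi\|^i=\{w\mid w\models^i\psi\}$.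 The translation $E^\pm$: $E^\pm(p_i)=p_i$, $E^\pm(\sim p_i)=q_i$, $E^\pm(\phi\wedge\psi)=E^\pm(\phi)\wedge E^\pm(\psi)$, $E^\pm(\sim(\phi\wedge\psi))=E^\pm(\sim\phi)\vee E^\pm(\sim\psi)$, $E^\pm(\phi\vee\psi)=E^\pm(\phi)\vee E^\pm(\psi)$, $E^\pm(\sim(\phi\vee\psi))=E^\pm(\sim\phi)\wedge E^\pm(\sim\psi)$, $E^\pm(\sim\sim\phi)=E^\pm(\phi)$, $E^\pm(\phi\to\psi)=E^\pm(\phi)\to E^\pm(\psi)$, $E^\pm(\sim(\phi\to\psi))=E^\pm(\phi)\wedge E^\pm(\sim\psi)$, $E^\pm(\phi\Box\!\!\rightarrow\psi)=E^\pm(\phi)\Box\!\!\rightarrow(E^\pm(\sim\phi)\Box\!\!\rightarrow E^\pm(\psi))$, $E^\pm(\sim(\phi\Box\!\!\rightarrow\psi))=E^\pm(\phi)\Diamond\!\!\rightarrow(E^\pm(\sim\phi)\Diamond\!\!\rightarrow E^\pm(\sim\psi))$. *)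

Set Implicit Arguments.

Inductive nform : Type :=
| NVar : nat -> nform
| NAnd : nform -> nform -> nform
| NOr  : nform -> nform -> nform
| NImp : nform -> nform -> nform
| NNeg : nform -> nform               (* strong negation ~ *)
| NBox : nform -> nform -> nform.

Inductive iform : Type :=
| IP   : nat -> iform
| IQ   : nat -> iform
| IAnd : iform -> iform -> iform
| IOr  : iform -> iform -> iform
| IImp : iform -> iform -> iform
| IBox : iform -> iform -> iform
| IDia : iform -> iform -> iform.

(* ---------- Translation E^{+-} ----------
   Etr true phi  = E^{+-}(phi)
   Etr false phi = E^{+-}(~ phi)                                    *)
Fixpoint Etr (pos : bool) (phi : nform) : iform :=
  match phi with
  | NVar i => if pos then IP i else IQ i
  | NAnd a b => if pos then IAnd (Etr true a) (Etr true b)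
                else IOr (Etr false a) (Etr false b)
  | NOr a b => if pos then IOr (Etr true a) (Etr true b)
               else IAnd (Etr false a) (Etr false b)
  | NImp a b => if pos then IImp (Etr true a) (Etr true b)
                else IAnd (Etr true a) (Etr false b)
  | NNeg a => Etr (negb pos) a
  | NBox a b => if pos then IBox (Etr true a) (IBox (Etr false a) (Etr true b))
                else IDia (Etr true a) (IDia (Etr false a) (Etr false b))
  end.

Definition E (phi : nform) : iform := Etr true phi.

Definition is_preorder (W : Type) (le : W -> W -> Prop) : Prop :=
  (forall w, le w w) /\ (forall u v w, le u v -> le v w -> le u w).

Definition upward_closed (W : Type) (le : W -> W -> Prop) (X : W -> Prop) : Prop :=
  forall w w', le w w' -> X w -> X w'.

(* ---------- Extended conditional intuitionistic models ----------
   R X w v  stands for  R_X(w,v), i.e. (w,X,v) in R.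
   Vp i = V(p_i), Vq i = V(q_i).                                    *)
Definition is_ECI_model (W : Type) (le : W -> W -> Prop)
    (R : (W -> Prop) -> W -> W -> Prop) (Vp Vq : nat -> W -> Prop) : Prop :=
  inhabited W /\
  is_preorder le /\
  (forall i, upward_closed le (Vp i)) /\
  (forall i, upward_closed le (Vq i)) /\
  (forall X w w' v, le w w' -> R X w v -> exists v', R X w' v' /\ le v v') /\
  (forall X w v v', R X w v -> le v v' -> exists w', R X w' v' /\ le w w').

Fixpoint isat (W : Type) (le : W -> W -> Prop)
    (R : (W -> Prop) -> W -> W -> Prop) (Vp Vq : nat -> W -> Prop)
    (w : W) (phi : iform) : Prop :=
  match phi with
  | IP i => Vp i w
  | IQ i => Vq i w
  | IAnd a b => isat le R Vp Vq w a /\ isat le R Vp Vq w b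
  | IOr a b => isat le R Vp Vq w a \/ isat le R Vp Vq w b
  | IImp a b => forall v, le w v -> isat le R Vp Vq v a -> isat le R Vp Vq v b
  | IBox a b => forall v u, le w v -> R (fun x => isat le R Vp Vq x a) v u ->
                  isat le R Vp Vq u b
  | IDia a b => exists u, R (fun x => isat le R Vp Vq x a) w u /\
                  isat le R Vp Vq u b
  end.

(* ---------- Nelsonian conditional models ----------
   NR X Y w v  stands for  R_{(X,Y)}(w,v).                          *)
Definition is_Nelson_model (W : Type) (le : W -> W -> Prop)
    (NR : (W -> Prop) -> (W -> Prop) -> W -> W -> Prop)
    (Vplus Vminus : nat -> W -> Prop) : Prop :=
  inhabited W /\
  is_preorder le /\
  (forall i, upward_closed le (Vplus i)) /\
  (forall i, upward_closed le (Vminus i)) /\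
  (forall X Y w w' v, le w w' -> NR X Y w v -> exists v', NR X Y w' v' /\ le v v') /\
  (forall X Y w v v', NR X Y w v -> le v v' -> exists w', NR X Y w' v' /\ le w w').

(* nsat true  w phi  :  w |=+ phi  (verification)
   nsat false w phi  :  w |=- phi  (falsification)                  *)
Fixpoint nsat (W : Type) (le : W -> W -> Prop)
    (NR : (W -> Prop) -> (W -> Prop) -> W -> W -> Prop)
    (Vplus Vminus : nat -> W -> Prop)
    (pos : bool) (w : W) (phi : nform) : Prop :=
  match phi with
  | NVar i => if pos then Vplus i w else Vminus i w
  | NAnd a b => if pos then nsat le NR Vplus Vminus true w a /\ nsat le NR Vplus Vminus true w b
                else nsat le NR Vplus Vminus false w a \/ nsat le NR Vplus Vminus false w b
  | NOr a b => if pos then nsat le NR Vplus Vminus true w a \/ nsat le NR Vplus Vminus true w b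
               else nsat le NR Vplus Vminus false w a /\ nsat le NR Vplus Vminus false w b
  | NImp a b =>
      if pos then forall v, le w v -> nsat le NR Vplus Vminus true v a ->
                    nsat le NR Vplus Vminus true v b
      else nsat le NR Vplus Vminus true w a /\ nsat le NR Vplus Vminus false w b
  | NNeg a => nsat le NR Vplus Vminus (negb pos) w a
  | NBox a b =>
      if pos then
        forall v u, le w v ->
          NR (fun x => nsat le NR Vplus Vminus true x a)
             (fun x => nsat le NR Vplus Vminus false x a) v u ->
          nsat le NR Vplus Vminus true u b
      else
        exists u, NR (fun x => nsat le NR Vplus Vminus true x a)
                     (fun x => nsat le NR Vplus Vminus false x a) w u /\
                  nsat le NR Vplus Vminus false u b
  end.

Definition Rn4 (W : Type) (R : (W -> Prop) -> W -> W -> Prop)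
    (X Y : W -> Prop) (w v : W) : Prop :=
  exists u, R X w u /\ R Y u v.

(* Verification of ~phi is simulated by E(~phi), with q_i standing for ~p_i.
   An R^n4-step for (X, Y) is an X-step followed by a Y-step, so the
   falsification clause of a conditional becomes two nested <>-> directly.
   For []-> the intuitionistic reading of the inner conditional also ranges
   over the <=-successors of the intermediate world; the back condition (c2)
   moves such a successor back along the X-step, so nothing new is quantified
   over and two nested []-> express exactly one R^n4-box. *)

From Stdlib Require Import Setoid FunctionalExtensionality PropExtensionality.

Lemma pred_ext {W : Type} {P Q : W -> Prop} :
  (forall x, P x <-> Q x) -> P = Q.
Proof.
  intros PQ; apply functional_extensionality; intros x.
  apply propositional_extensionality, PQ.
Qed.

Lemma Rn4_dia {W : Type} (R : (W -> Prop) -> W -> W -> Prop)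
    (X Y P : W -> Prop) (w : W) :
  (exists u, Rn4 R X Y w u /\ P u) <->
  (exists m, R X w m /\ exists u, R Y m u /\ P u).
Proof. unfold Rn4; firstorder. Qed.

Section Composition.

Context {W : Type} {le : W -> W -> Prop} {R : (W -> Prop) -> W -> W -> Prop}.

Hypothesis le_refl : forall w, le w w.
Hypothesis le_trans : forall u v w, le u v -> le v w -> le u w.
Hypothesis R_forth :
  forall X w w' v, le w w' -> R X w v -> exists v', R X w' v' /\ le v v'.
Hypothesis R_back :
  forall X w v v', R X w v -> le v v' -> exists w', R X w' v' /\ le w w'.

Lemma Rn4_forth X Y w w' v :
  le w w' -> Rn4 R X Y w v -> exists v', Rn4 R X Y w' v' /\ le v v'.
Proof.
  intros Hw [m [Hwm Hmv]].
  destruct (R_forth _ _ _ _ Hw Hwm) as [m' [Hwm' Hm]].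
  destruct (R_forth _ _ _ _ Hm Hmv) as [v' [Hmv' Hv]].
  exists v'; split; [exists m'; split|]; assumption.
Qed.

Lemma Rn4_back X Y w v v' :
  Rn4 R X Y w v -> le v v' -> exists w', Rn4 R X Y w' v' /\ le w w'.
Proof.
  intros [m [Hwm Hmv]] Hv.
  destruct (R_back _ _ _ _ Hmv Hv) as [m' [Hmv' Hm]].
  destruct (R_back _ _ _ _ Hwm Hm) as [w' [Hwm' Hw]].
  exists w'; split; [exists m'; split|]; assumption.
Qed.

Lemma Rn4_box X Y (P : W -> Prop) w :
  (forall v u, le w v -> Rn4 R X Y v u -> P u) <->
  (forall v m, le w v -> R X v m -> forall v' u, le m v' -> R Y v' u -> P u).
Proof.
  split.
  - intros H v m Hv Hvm v' u Hm Hv'u.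
    destruct (R_back _ _ _ _ Hvm Hm) as [v'' [Hv''m Hv'']].
    apply (H v''); [eapply le_trans; eassumption | exists v'; split; assumption].
  - intros H v u Hv [m [Hvm Hmu]].
    exact (H v m Hv Hvm m u (le_refl m) Hmu).
Qed.

Variables Vp Vq : nat -> W -> Prop.

Lemma nsat_Rn4_Etr phi : forall pos w,
  nsat le (Rn4 R) Vp Vq pos w phi <-> isat le R Vp Vq w (Etr pos phi).
Proof.
  induction phi as [i|a IHa b IHb|a IHa b IHb|a IHa b IHb|a IHa|a IHa b IHb];
    intros [|] w; cbn; try reflexivity; try apply IHa;
    try (setoid_rewrite IHa; setoid_rewrite IHb; reflexivity).
  (* The antecedent enters R only through its truth sets, so its induction
     hypothesis is needed as an equality of predicates. *)
  - rewrite (pred_ext (IHa true)), (pred_ext (IHa false)), Rn4_box.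
    setoid_rewrite IHb; reflexivity.
  - rewrite (pred_ext (IHa true)), (pred_ext (IHa false)), Rn4_dia.
    setoid_rewrite IHb; reflexivity.
Qed.

End Composition.

Theorem lemma14 (W : Type) (le : W -> W -> Prop)
    (R : (W -> Prop) -> W -> W -> Prop) (Vp Vq : nat -> W -> Prop) :
  is_ECI_model le R Vp Vq ->
  is_Nelson_model le (Rn4 R) Vp Vq /\
  (forall (w : W) (phi : nform),
      nsat le (Rn4 R) Vp Vq true w phi <-> isat le R Vp Vq w (E phi)).
Proof.
  intros (Hinh & [Hrefl Htrans] & HVp & HVq & Hforth & Hback).
  split.
  - refine (conj Hinh (conj (conj Hrefl Htrans) (conj HVp (conj HVq (conj _ _))))).
    + exact (Rn4_forth Hforth).
    + exact (Rn4_back Hback).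
  - intros w phi; exact (nsat_Rn4_Etr Hrefl Htrans Hback Vp Vq phi true w).
Qed.
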